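(* Let $\mathcal N=(\mathcal S,\mathcal C,\mathcal R)$ be a chemical reaction network and $\tilde{\mathcal N}=(\mathcal S,\tilde{\mathcal C},\mathcal{CR}_K,\tilde{\mathcal R})$ a strong translation of $\mathcal N$. Then the stoichiometric subspaces of $\mathcal N$ and of $\tilde{\mathcal N}$ coincide, and the kinetic-order subspace $\tilde S$ of $\tilde{\mathcal N}$ is $$\tilde S=\mathrm{span}\left\{\bigcup_{k=1}^{\tilde\ell}\{y_p-y_q:\ p,q\in\mathcal{CR}_K,\ h_2(p),h_2(q)\in\tilde{\mathcal L}_k\}\right\},$$ where $\tilde{\mathcal L}_1,\dots,\tilde{\mathcal L}_{\tilde\ell}$ are the linkage classes of $\tilde{\mathcal N}$.
   Context: A chemical reaction network $\mathcal N=(\mathcal S,\mathcal C,\mathcal R)$ consists of species $\mathcal A_1,\dots,\mathcal A_m$, pairwise distinct complexes $\mathcal C_1,\dots,\mathcal C_n$ with stoichiometric vectors $y_1,\dots,y_n\in\mathbb Z^m_{\ge 0}$, and reactions $\mathcal R_i:\mathcal C_{\rho(i)}\to\mathcal C_{\rho'(i)}$, $i=1,\dots,r$, $\rho(i)\neq\rho'(i)$; every species appears in some complex and every complex in some reaction. Complexes are identified with their indices; $\mathcal{CR}=\{\rho(i)\}$ is the reactant complex set. The stoichiometric subspace is $S=\mathrm{span}\{y_{\rho'(i)}-y_{\rho(i)}\}$. Linkage classes are the connected components of the underlying undirected reaction graph; weakly reversible means every reaction $\mathcal C_a\to\mathcal C_b$ admits a directed path from $\mathcal C_b$ back to $\mathcal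 C_a$. A translation of $\mathcal N$ is $\tilde{\mathcal N}=(\mathcal S,\tilde{\mathcal C},\mathcal{CR}_K,\tilde{\mathcal R})$, where $(\mathcal S,\tilde{\mathcal C},\tilde{\mathcal R})$ is a chemical reaction network with complexes $\tilde{\mathcal C}_j$ (vectors $\tilde y_j$), reactions $\tilde{\mathcal R}_l:\tilde{\mathcal C}_{\tilde\rho(l)}\to\tilde{\mathcal C}_{\tilde\rho'(l)}$, reactant complex set $\tilde{\mathcal{CR}}$, and $\mathcal{CR}_K\subseteq\mathcal{CR}$, such that: (1) there is a bijection $h_1:\mathcal R\to\tilde{\mathcal R}$ with $\tilde y_{\tilde\rho'(h_1(i))}-\tilde y_{\tilde\rho(h_1(i))}=y_{\rho'(i)}-y_{\rho(i)}$; (2) there is a surjection $h_2:\mathcal{CR}\to\tilde{\mathcal{CR}}$ with $h_2(\rho(i))=\tilde\rho(h_1(i))$; (3) for each $j\in\tilde{\mathcal{CR}}$, $\mathcal{CR}_K$ contains exactly one element $\kappa(j)$ of $h_2^{-1}(j)$, the kinetic complex of $\tilde{\mathcal C}_j$ (non-reactant complexes of $\tilde{\mathcal N}$ get arbitrary kinetic complexes from $\mathcal{CR}_K$). The translation is strong if $\tilde{\mathcal N}$ is weakly reversible. The stoichiometric subspace of $\tilde{\mathcal N}$ is $\mathrm{span}\{\tilde y_{\tilde\rho'(l)}-\tilde y_{\tilde\rho(l)}\}$, and its kinetic-order subspace is $\tilde S=\mathrm{span}\{y_{\kappa(\tilde\rho'(l))}-y_{\kappa(\tilde\rho(l))}\}$.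 *)

From HB Require Import structures.
From mathcomp Require Import all_boot all_order all_algebra.
From mathcomp Require Export reals.
Set Implicit Arguments. Unset Strict Implicit. Unset Printing Implicit Defensive.
Import GRing.Theory.
Local Open Scope ring_scope.

(* A CRN with m species, n complexes, r reactions:
   y i : the stoichiometric vector (in Z_{>=0}^m) of complex i,
   reaction k is  C_(rho k) -> C_(rho' k). *)

Definition is_crn (m n r : nat) (y : 'I_n -> {ffun 'I_m -> nat})
  (rho rho' : 'I_r -> 'I_n) : Prop :=
  [/\ injective y,
      (forall s : 'I_m, exists i : 'I_n, (0 < y i s)%N),
      (forall c : 'I_n, exists k : 'I_r, rho k = c \/ rho' k = c)
    & (forall k : 'I_r, rho k != rho' k)].

Definition reactants (n r : nat) (rho : 'I_r -> 'I_n) : {set 'I_n} :=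
  [set rho k | k : 'I_r].

Definition cvec (R : realType) (m n : nat) (y : 'I_n -> {ffun 'I_m -> nat})
  (i : 'I_n) : 'rV[R]_m := \row_(j < m) ((y i j)%:R).

Definition stoich_subspace (R : realType) (m n r : nat)
  (y : 'I_n -> {ffun 'I_m -> nat}) (rho rho' : 'I_r -> 'I_n) : {vspace 'rV[R]_m} :=
  <<[seq cvec R y (rho' k) - cvec R y (rho k) | k <- enum 'I_r]>>%VS.

Definition reacts (n r : nat) (rho rho' : 'I_r -> 'I_n) : rel 'I_n :=
  fun a b => [exists k : 'I_r, (rho k == a) && (rho' k == b)].

Definition weakly_reversible (n r : nat) (rho rho' : 'I_r -> 'I_n) : Prop :=
  forall k : 'I_r, connect (reacts rho rho') (rho' k) (rho k).

Definition ureacts (n r : nat) (rho rho' : 'I_r -> 'I_n) : rel 'I_n :=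
  fun a b => reacts rho rho' a b || reacts rho rho' b a.

Definition linkage_classes (n r : nat) (rho rho' : 'I_r -> 'I_n) : {set {set 'I_n}} :=
  [set [set b | connect (ureacts rho rho') a b] | a : 'I_n].

(* Nt = (S, Ct, CR_K, Rt) is a translation of N = (S, C, R), with maps
   h1 : R -> Rt, h2 : CR -> CRt (given as a total map, only its values on CR matter),
   and kappa : Ct -> CR_K assigning kinetic complexes. *)
Definition is_translation (m n r nt rt : nat)
  (y : 'I_n -> {ffun 'I_m -> nat}) (rho rho' : 'I_r -> 'I_n)
  (yt : 'I_nt -> {ffun 'I_m -> nat}) (rhot rhot' : 'I_rt -> 'I_nt)
  (CRK : {set 'I_n}) (h1 : 'I_r -> 'I_rt) (h2 : 'I_n -> 'I_nt)
  (kappa : 'I_nt -> 'I_n) : Prop :=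
  [/\ is_crn y rho rho' & is_crn yt rhot rhot'] /\
  [/\ bijective h1 &
      (forall (k : 'I_r) (s : 'I_m),
          (yt (rhot' (h1 k)) s)%:Z - (yt (rhot (h1 k)) s)%:Z
          = (y (rho' k) s)%:Z - (y (rho k) s)%:Z)] /\
  [/\ h2 @: reactants rho = reactants rhot &
      (forall k : 'I_r, h2 (rho k) = rhot (h1 k))] /\
  [/\ CRK \subset reactants rho,
      (forall j, j \in reactants rhot ->
         [/\ kappa j \in CRK, h2 (kappa j) = j &
             forall p, p \in CRK -> h2 p = j -> p = kappa j])
    & (forall j, kappa j \in CRK)].

Definition kinetic_order_subspace (R : realType) (m n nt rt : nat)
  (y : 'I_n -> {ffun 'I_m -> nat}) (rhot rhot' : 'I_rt -> 'I_nt)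
  (kappa : 'I_nt -> 'I_n) : {vspace 'rV[R]_m} :=
  <<[seq cvec R y (kappa (rhot' l)) - cvec R y (kappa (rhot l)) | l <- enum 'I_rt]>>%VS.

Definition CRK_pairs_span (R : realType) (m n nt rt : nat)
  (y : 'I_n -> {ffun 'I_m -> nat}) (rhot rhot' : 'I_rt -> 'I_nt)
  (CRK : {set 'I_n}) (h2 : 'I_n -> 'I_nt) : {vspace 'rV[R]_m} :=
  <<[seq cvec R y pq.1 - cvec R y pq.2 | pq <- enum [set: ('I_n * 'I_n)%type] &
       [&& pq.1 \in CRK, pq.2 \in CRK &
          [exists L in linkage_classes rhot rhot', (h2 pq.1 \in L) && (h2 pq.2 \in L)]]]>>%VS.

From HB Require Import structures.
From mathcomp Require Import all_boot all_order all_algebra.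
From mathcomp Require Import reals.

Set Implicit Arguments.
Unset Strict Implicit.
Unset Printing Implicit Defensive.
Import GRing.Theory.
Local Open Scope ring_scope.

(* A translation only shifts reactions, so h1 matches the reaction vectors of
   the two networks and their spans agree. In a weakly reversible network every
   complex is a reactant; then kappa and h2 are inverse bijections between the
   complexes of the translation and CR_K. Summing kinetic-order edge vectors
   y_kappa(b) - y_kappa(a) along an undirected path shows that every difference
   inside a linkage class lies in the kinetic-order subspace, and conversely
   each edge lies in its own linkage class. *)

Section ReactionGraph.

Variables (n r : nat) (rho rho' : 'I_r -> 'I_n).

Lemma ureacts_sym : symmetric (ureacts rho rho').
Proof. by move=> a b; rewrite /ureacts orbC. Qed.

Lemma connect_ureacts_sym : connect_sym (ureacts rho rho').
Proof. exact/sym_connect_sym/ureacts_sym. Qed.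

Lemma ureacts_reaction (k : 'I_r) : ureacts rho rho' (rho k) (rho' k).
Proof. by apply/orP; left; apply/existsP; exists k; rewrite !eqxx. Qed.

Definition same_linkage_class (a b : 'I_n) : bool :=
  [exists L in linkage_classes rho rho', (a \in L) && (b \in L)].

Lemma same_linkage_classP (a b : 'I_n) :
  reflect (connect (ureacts rho rho') a b) (same_linkage_class a b).
Proof.
apply: (iffP existsP) => [[L /andP [/imsetP [c _ ->]]]|ab].
  rewrite !inE => /andP [ca cb].
  by apply: connect_trans cb; rewrite connect_ureacts_sym.
exists [set b | connect (ureacts rho rho') a b].
by rewrite imset_f // !inE connect0 ab.
Qed.

Lemma memv_span_connect (K : fieldType) (vT : vectType K) (f : 'I_n -> vT)
    (a b : 'I_n) :
  connect (ureacts rho rho') a b ->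
  f b - f a \in <<[seq f (rho' k) - f (rho k) | k <- enum 'I_r]>>%VS.
Proof.
have edge k : f (rho' k) - f (rho k) \in <<[seq f (rho' k) - f (rho k) | k <- enum 'I_r]>>%VS.
  by apply/memv_span/map_f; rewrite mem_enum.
move=> /connectP [p + ->] {b}.
elim: p a => [|c p IHp] a /=; first by rewrite subrr mem0v.
move=> /andP [ac /IHp path_c].
rewrite -[_ - f a](subrKA (f c)); apply: memvD path_c _.
by case/orP: ac => /existsP [k /andP [/eqP <- /eqP <-]]; rewrite ?edge // -opprB memvN.
Qed.

Lemma weakly_reversible_reactants (m : nat) (y : 'I_n -> {ffun 'I_m -> nat}) :
  is_crn y rho rho' -> weakly_reversible rho rho' -> reactants rho = setT.
Proof.
move=> [_ _ cover noloop] wr; apply/setP => c; rewrite inE.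
have [k [<-|<-]] := cover c; first exact: imset_f.
have /connectP [[|d p] /= + last_p] := wr k.
  by move=> _; have := noloop k; rewrite last_p eqxx.
by case/andP=> /existsP [l /andP [/eqP <- _]] _; apply: imset_f.
Qed.

End ReactionGraph.

Lemma cvecB_eq (R : realType) (m n n' : nat) (y : 'I_n -> {ffun 'I_m -> nat})
    (y' : 'I_n' -> {ffun 'I_m -> nat}) (a b : 'I_n) (a' b' : 'I_n') :
  (forall s, (y a s)%:Z - (y b s)%:Z = (y' a' s)%:Z - (y' b' s)%:Z) ->
  cvec R y a - cvec R y b = cvec R y' a' - cvec R y' b'.
Proof.
move=> eq_diff; apply/rowP => s; rewrite !mxE.
by have := congr1 (fun z : int => z%:~R : R) (eq_diff s); rewrite !intrB.
Qed.

Lemma span_map_bij (K : fieldType) (vT : vectType K) (I J : finType)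
    (f : J -> vT) (h : I -> J) :
  bijective h -> <<[seq f (h i) | i <- enum I]>>%VS = <<[seq f j | j <- enum J]>>%VS.
Proof.
case=> g hK gK; apply/subv_anti/andP; split; apply/span_subvP => v /mapP [x _ ->].
  by apply/memv_span/map_f; rewrite mem_enum.
by rewrite -[x]gK; apply/memv_span/(map_f (f \o h)); rewrite mem_enum.
Qed.

Section Translation.

Variables (R : realType) (m n r nt rt : nat).
Variables (y : 'I_n -> {ffun 'I_m -> nat}) (rho rho' : 'I_r -> 'I_n).
Variables (yt : 'I_nt -> {ffun 'I_m -> nat}) (rhot rhot' : 'I_rt -> 'I_nt).
Variables (CRK : {set 'I_n}) (h1 : 'I_r -> 'I_rt) (h2 : 'I_n -> 'I_nt).
Variable kappa : 'I_nt -> 'I_n.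
Hypothesis translation : is_translation y rho rho' yt rhot rhot' CRK h1 h2 kappa.

Lemma translation_stoich_subspace :
  stoich_subspace R y rho rho' = stoich_subspace R yt rhot rhot'.
Proof.
have [_ [[h1_bij reaction_vec] _]] := translation.
rewrite /stoich_subspace -(span_map_bij (fun l => cvec R yt (rhot' l) - cvec R yt (rhot l)) h1_bij).
by congr <<_>>%VS; apply: eq_map => k; apply: cvecB_eq.
Qed.

Lemma translation_h2_kappa (j : 'I_nt) : j \in reactants rhot -> h2 (kappa j) = j.
Proof. by have [_ [_ [_ [_ kin _]]]] := translation; case/kin. Qed.

Lemma translation_kappa_h2 (p : 'I_n) :
  p \in CRK -> h2 p \in reactants rhot -> kappa (h2 p) = p.
Proof.
have [_ [_ [_ [_ kin _]]]] := translation.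
by move=> pK /kin [_ _ uniq_kin]; rewrite -(uniq_kin p pK).
Qed.

End Translation.

Theorem lemma4p4 (R : realType) (m n r nt rt : nat)
  (y : 'I_n -> {ffun 'I_m -> nat}) (rho rho' : 'I_r -> 'I_n)
  (yt : 'I_nt -> {ffun 'I_m -> nat}) (rhot rhot' : 'I_rt -> 'I_nt)
  (CRK : {set 'I_n}) (h1 : 'I_r -> 'I_rt) (h2 : 'I_n -> 'I_nt)
  (kappa : 'I_nt -> 'I_n) :
  is_translation y rho rho' yt rhot rhot' CRK h1 h2 kappa ->
  weakly_reversible rhot rhot' ->
  stoich_subspace R y rho rho' = stoich_subspace R yt rhot rhot' /\
  kinetic_order_subspace R y rhot rhot' kappa =
  CRK_pairs_span R y rhot rhot' CRK h2.
Proof.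
move=> tr wr; split; first exact: translation_stoich_subspace tr.
have [[_ crn_t] [_ [_ [_ _ kappa_CRK]]]] := tr.
have all_reactants j : j \in reactants rhot.
  by rewrite (weakly_reversible_reactants crn_t wr) inE.
have h2_kappa := translation_h2_kappa tr (all_reactants _).
apply/subv_anti/andP; split; apply/span_subvP => v /mapP [x x_in ->].
  apply/memv_span/mapP; exists (kappa (rhot' x), kappa (rhot x)) => //.
  rewrite mem_filter mem_enum in_setT andbT /= !kappa_CRK !h2_kappa /=.
  apply/same_linkage_classP; rewrite connect_ureacts_sym.
  exact/connect1/ureacts_reaction.
move: x_in; rewrite mem_filter => /andP [/and3P [pK qK /same_linkage_classP pq] _].
rewrite -(translation_kappa_h2 tr pK (all_reactants _)).
rewrite -(translation_kappa_h2 tr qK (all_reactants _)).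
by apply: (memv_span_connect (fun j => cvec R y (kappa j))); rewrite connect_ureacts_sym.
Qed.
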